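(* Let $d\ge 1$, $n_1,\dots,n_d\ge 1$, $R\ge 1$, and let $\bm{U}_p\in\mathbb{R}^{n_p\times R}$ for $p=1,\dots,d$. Let $\mathcal{A}\in\mathbb{R}^{n_1\times\cdots\times n_d}$ be the CP tensor $$\mathcal{A}=\sum_{r=1}^R \bm{U}_1(:,r)\circ\bm{U}_2(:,r)\circ\cdots\circ\bm{U}_d(:,r),\quad\text{i.e.}\quad \mathcal{A}(i_1,\dots,i_d)=\sum_{r=1}^R\prod_{p=1}^d \bm{U}_p(i_p,r).$$ Let $1\le k\le \prod_{p=1}^d n_p$. Consider the optimization problem over matrices $\bm{X}_p\in\mathbb{R}^{n_p\times k}$, $p=1,\dots,d$: $$\max\ \sum_{j=1}^k\sum_{r=1}^R\prod_{p=1}^d\langle \bm{X}_p(:,j),\,\bm{U}_p(:,r)*\bm{X}_p(:,j)\rangle$$ subject to $\|\bm{X}_p(:,j)\|_2=1$ for all $p=1,\dots,d$ and $j=1,\dots,k$, and $$\prod_{p=1}^d\langle \bm{X}_p(:,i),\bm{X}_p(:,j)\rangle=\begin{cases}1,& i=j,\\ 0,& i\ne j,\end{cases}\qquad i,j=1,\dots,k.$$ Then retrieving the $k$ largest elements of $\mathcal{A}$ is equivalent to solving this problem: its maximum value equals the sum of the $k$ largest entries of $\mathcal{A}$ (counted with multiplicity over the $\prod_p n_p$ positions), and it is attained by choosing distinct multi-indices $(i^{(j)}_1,\dots,i^{(j)}_d)$, $j=1,\dots,k$, at which the $k$ largest entries of $\mathcal{A}$ occur and setting $\bm{X}_p(:,j)=\bm{e}_{i^{(j)}_p}$,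 the $i^{(j)}_p$-th standard basis vector of $\mathbb{R}^{n_p}$.
   Context: $\circ$ denotes the vector outer product, $*$ the entrywise (Hadamard) product of vectors, and $\langle\cdot,\cdot\rangle$ the Euclidean inner product; thus $\langle \bm{x},\bm{u}*\bm{x}\rangle=\sum_{l}\bm{u}(l)\bm{x}(l)^2$. $\bm{X}(:,j)$ denotes the $j$-th column of a matrix $\bm{X}$. The paper states the theorem informally as ''retrieving the $k$ largest elements of $\mathcal{A}$ is equivalent to solving the continuous constrained optimization problem''; the precise sense stated here (optimal value equals the sum of the $k$ largest entries, attained at standard basis vectors located at those entries) is the meaning of that equivalence. *)

From HB Require Import structures.
From mathcomp Require Import all_boot all_order all_algebra.
Set Implicit Arguments. Unset Strict Implicit. Unset Printing Implicit Defensive.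
Import Order.TTheory GRing.Theory Num.Theory.
Local Open Scope ring_scope.

Definition midx (d : nat) (n : 'I_d -> nat) := {dffun forall p : 'I_d, 'I_(n p)}.

Definition cpA (R : rcfType) (d : nat) (n : 'I_d -> nat) (Rk : nat)
  (U : forall p : 'I_d, 'M[R]_(n p, Rk)) (m : midx n) : R :=
  \sum_(r < Rk) \prod_(p < d) U p (m p) r.

Definition topk_sum (R : rcfType) (I : finType) (A : I -> R) (k : nat) : R :=
  \sum_(x <- take k (sort (fun a b : R => b <= a) [seq A i | i : I])) x.

Definition cp_obj (R : rcfType) (d : nat) (n : 'I_d -> nat) (Rk k : nat)
  (U : forall p : 'I_d, 'M[R]_(n p, Rk)) (X : forall p : 'I_d, 'M[R]_(n p, k)) : R :=
  \sum_(j < k) \sum_(r < Rk) \prod_(p < d)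
     \sum_(l < n p) X p l j * (U p l r * X p l j).

Definition cp_feasible (R : rcfType) (d : nat) (n : 'I_d -> nat) (k : nat)
  (X : forall p : 'I_d, 'M[R]_(n p, k)) : Prop :=
  (forall (p : 'I_d) (j : 'I_k), Num.sqrt (\sum_(l < n p) X p l j ^+ 2) = 1) /\
  (forall i j : 'I_k,
     \prod_(p < d) (\sum_(l < n p) X p l i * X p l j) = (i == j)%:R).

Definition topk_positions (R : rcfType) (I : finType) (k : nat)
  (A : I -> R) (idx : 'I_k -> I) : Prop :=
  injective idx /\
  (forall (j : 'I_k) (m : I), (forall j' : 'I_k, m != idx j') -> A m <= A (idx j)).

Definition basisX (R : rcfType) (d : nat) (n : 'I_d -> nat) (k : nat)
  (idx : 'I_k -> midx n) : forall p : 'I_d, 'M[R]_(n p, k) :=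
  fun p => \matrix_(l < n p, j < k) ((l == idx j p)%:R : R).

From HB Require Import structures.
From mathcomp Require Import all_boot all_order all_algebra.
From mathcomp Require Import ring lra.
Set Implicit Arguments.
Unset Strict Implicit.
Unset Printing Implicit Defensive.

Import Order.TTheory GRing.Theory Num.Theory.
Local Open Scope ring_scope.

(* Let z_j be the flattened rank-one tensor X_1(:,j) o ... o X_d(:,j).  The
   inner product of z_i and z_j factors as prod_p <X_p(:,i), X_p(:,j)>, so the
   coupling constraint says exactly that z_1, ..., z_k are orthonormal, while
   the objective equals sum_m c(m) A(m) with weights c(m) = sum_j z_j(m)^2.
   Orthonormality gives sum_m c(m) = k and, by Bessel's inequality,
   0 <= c(m) <= 1; such a fractional choice of k entries never beats the k
   largest entries.  Standard basis vectors at k distinct top positions turn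
   the z_j into distinct basis vectors of the tensor space, attaining the
   bound. *)

Lemma sum_delta (R : pzSemiRingType) (I : finType) (a : I) (F : I -> R) :
  \sum_i (i == a)%:R * F i = F a.
Proof.
by rewrite (bigD1 a) //= eqxx mul1r big1 ?addr0 // => i /negbTE ->; rewrite mul0r.
Qed.

Section TopSets.
Variables (R : realDomainType) (I : finType) (A : I -> R).

Definition topset (S : {set I}) := forall x y, x \in S -> y \notin S -> A y <= A x.

Lemma sum_indicator (S : {set I}) (F : I -> R) :
  \sum_m (m \in S)%:R * F m = \sum_(m in S) F m.
Proof.
by rewrite [RHS]big_mkcond; apply: eq_bigr => m _; case: (m \in S); rewrite ?mul1r ?mul0r.
Qed.

Lemma sum_indicator_card (S : {set I}) : \sum_m ((m \in S)%:R : R) = #|S|%:R.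
Proof.
by under eq_bigr do rewrite -[_%:R]mulr1; rewrite sum_indicator sumr_const.
Qed.

Lemma weighted_sum_le_topset (S : {set I}) (c : I -> R) :
  topset S -> (forall m, 0 <= c m <= 1) -> \sum_m c m = #|S|%:R ->
  \sum_m c m * A m <= \sum_(m in S) A m.
Proof.
move=> topS c01 sum_c.
have [S0 | /set0Pn [x0 x0S]] := eqVneq S set0.
  have c0 : forall m, c m = 0.
    move: sum_c; rewrite S0 cards0 => /psumr_eq0P c0 m.
    by apply: c0 => // i _; case/andP: (c01 i).
  by rewrite S0 big_set0 big1 // => m _; rewrite c0 mul0r.
pose t := A [arg min_(i < x0 in S) A i]%O.
have t_min : forall m, m \in S -> t <= A m by rewrite /t; case: arg_minP.
have t_max : forall m, m \notin S -> A m <= t.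
  by rewrite /t; case: arg_minP => // i iS _ m mS; exact: topS.
have pointwise m : (c m - (m \in S)%:R) * (A m - t) <= 0.
  have /andP[c0 c1] := c01 m; case: (boolP (m \in S)) => mS /=.
    by have := t_min m mS; nra.
  by have := t_max m mS; nra.
rewrite -subr_le0 -sum_indicator.
(* [c] and the indicator of [S] have the same total, so shifting [A] by the
   threshold [t] leaves the difference of the weighted sums unchanged. *)
suff -> : \sum_m c m * A m - \sum_m (m \in S)%:R * A m =
          \sum_m (c m - (m \in S)%:R) * (A m - t).
  by apply: sumr_le0 => m _; exact: pointwise.
under [RHS]eq_bigr do rewrite mulrBr mulrBl.
by rewrite sumrB -mulr_suml !sumrB sum_c sum_indicator_card subrr mul0r subr0.
Qed.

Lemma topset_sum_eq (S T : {set I}) :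
  topset S -> topset T -> #|S| = #|T| -> \sum_(m in S) A m = \sum_(m in T) A m.
Proof.
have ind01 (V : {set I}) m : 0 <= ((m \in V)%:R : R) <= 1.
  by case: (m \in V); rewrite /= ?lexx ?ler01.
move=> topS topT cardST; apply/eqP; rewrite eq_le.
by apply/andP; split;
  rewrite -sum_indicator weighted_sum_le_topset ?sum_indicator_card ?cardST.
Qed.
End TopSets.

Section TopkPositions.
Variables (R : rcfType) (I : finType) (k : nat) (A : I -> R).

Lemma topk_sum_topset : (k <= #|I|)%N ->
  exists S : {set I}, [/\ #|S| = k, topset A S & topk_sum A k = \sum_(m in S) A m].
Proof.
move=> kI.
set r := relpre A (fun a b : R => b <= a).
set L := sort r (enum I).
have r_total : total r by move=> x y; exact: le_total.
have r_trans : transitive r by move=> y x z xy yz; exact: le_trans yz xy.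
have L_uniq : uniq L by rewrite sort_uniq enum_uniq.
have top_uniq : uniq (take k L) by rewrite take_uniq.
exists [set m in take k L]; split.
- by rewrite cardsE (card_uniqP top_uniq) size_takel // size_sort -cardE.
- move=> x y; rewrite !inE => xT yT.
  have yD : y \in drop k L.
    have : y \in L by rewrite mem_sort mem_enum.
    by rewrite -{1}(cat_take_drop k L) mem_cat (negbTE yT).
  move: (sort_sorted r_total (enum I)); rewrite -/L (sorted_pairwise r_trans).
  rewrite -(cat_take_drop k L) pairwise_cat => /and3P[/allrelP top_ge _ _].
  exact: top_ge.
- rewrite /topk_sum sort_map -/r -/L -map_take big_map big_uniq //.
  by apply: eq_bigl => m; rewrite inE.
Qed.

Lemma topk_positions_topset (idx : 'I_k -> I) :
  topk_positions A idx ->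
  #|[set idx j | j in 'I_k]| = k /\ topset A [set idx j | j in 'I_k].
Proof.
case=> idx_inj idx_top; split; first by rewrite card_imset // card_ord.
move=> x y /imsetP[j _ ->] yI; apply: idx_top => j'.
by apply: contra yI => /eqP ->; apply: imset_f.
Qed.

Lemma topk_positions_sum (idx : 'I_k -> I) :
  topk_positions A idx -> \sum_j A (idx j) = topk_sum A k.
Proof.
move=> idx_top; have [idx_inj _] := idx_top.
case/topk_positions_topset: (idx_top) => card_im top_im.
have k_le_I : (k <= #|I|)%N by rewrite -[k]card_ord; exact: leq_card idx_inj.
have [S [cardS topS ->]] := topk_sum_topset k_le_I.
rewrite -(big_imset _ (in2W idx_inj)) /=; apply: topset_sum_eq => //.
by rewrite card_im cardS.
Qed.

Lemma exists_topk_positions :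
  (k <= #|I|)%N -> exists idx : 'I_k -> I, topk_positions A idx.
Proof.
case/topk_sum_topset => S [cardS topS _].
exists (fun j => enum_val (cast_ord (esym cardS) j)); split.
  by move=> i j /enum_val_inj /cast_ord_inj.
move=> j m m_out; apply: topS; first exact: enum_valP.
apply/negP => mS; have := m_out (cast_ord cardS (enum_rank_in mS m)).
by rewrite cast_ordK enum_rankK_in // eqxx.
Qed.
End TopkPositions.

Section Orthonormal.
Variables (R : realDomainType) (I : finType) (k : nat) (z : 'I_k -> I -> R).
Hypothesis z_orthonormal : forall i j, \sum_m z i m * z j m = (i == j)%:R.

Lemma orthonormal_sum_sqr : \sum_m \sum_j z j m ^+ 2 = k%:R.
Proof.
rewrite exchange_big /= -[k in RHS]card_ord -sumr_const; apply: eq_bigr => j _.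
by under eq_bigr do rewrite expr2; rewrite z_orthonormal eqxx.
Qed.

(* [v] is the orthogonal projection onto the span of the [z j] of the basis
   vector at [m], hence [v m = |v|^2 >= v m ^+ 2]. *)
Lemma orthonormal_sqr_le1 m : \sum_j z j m ^+ 2 <= 1.
Proof.
pose v m' := \sum_j z j m * z j m'.
have v_m : v m = \sum_j z j m ^+ 2 by apply: eq_bigr => j _; rewrite expr2.
have v_norm : \sum_m' v m' ^+ 2 = v m.
  transitivity (\sum_i \sum_j z i m * z j m * \sum_m' z i m' * z j m').
    under eq_bigr do rewrite expr2 big_distrlr /=.
    rewrite exchange_big; apply: eq_bigr => i _ /=.
    rewrite exchange_big; apply: eq_bigr => j _ /=.
    by rewrite mulr_sumr; apply: eq_bigr => m' _; ring.
  apply: eq_bigr => i _.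
  by under eq_bigr do rewrite z_orthonormal eq_sym mulrC; rewrite sum_delta.
have v_m_ge0 : 0 <= v m by rewrite v_m; apply: sumr_ge0 => j _; exact: sqr_ge0.
have : v m ^+ 2 <= v m.
  rewrite -[leRHS]v_norm (bigD1 m) //= lerDl.
  by apply: sumr_ge0 => m' _; exact: sqr_ge0.
by rewrite -v_m; nra.
Qed.

Lemma orthonormal_card : (k <= #|I|)%N.
Proof.
rewrite -(ler_nat R) -orthonormal_sum_sqr -sum1_card natr_sum.
by apply: ler_sum => m _; exact: orthonormal_sqr_le1.
Qed.
End Orthonormal.

Lemma prod_sum_midx (R : comPzSemiRingType) (d : nat) (n : 'I_d -> nat)
    (F : forall p : 'I_d, 'I_(n p) -> R) :
  \prod_(p < d) \sum_(l < n p) F p l = \sum_(m : midx n) \prod_(p < d) F p (m p).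
Proof.
pose T_ p := 'I_(n p).
pose F_ p := [ffun l : T_ p => F p l].
transitivity (\prod_(p < d) \sum_(j in tagged_with T_ p) untag 0 (F_ p) j).
  apply: eq_bigr => p _; rewrite -(big_tag (op := +%R) F_).
  by apply: eq_bigr => l _; rewrite ffunE.
rewrite bigA_distr_big_dep -(big_fprod 1 +%R F_).
rewrite (reindex (@fprod_of_dffun _ T_)); last first.
  by exists (@dffun_of_fprod _ T_) => x _; rewrite ?fprod_of_dffunK ?dffun_of_fprodK.
by apply: eq_bigr => m _; apply: eq_bigr => p _; rewrite ffunE fprodE.
Qed.

Lemma card_midx (d : nat) (n : 'I_d -> nat) : #|{: midx n}| = \prod_(p < d) n p.
Proof.
rewrite card_dep_ffun foldrE big_map big_enum /=.
by apply: eq_bigr => p _; rewrite card_ord.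
Qed.

Section CPProblem.
Variables (R : rcfType) (d : nat) (n : 'I_d -> nat) (Rk k : nat).
Variable U : forall p : 'I_d, 'M[R]_(n p, Rk).

Definition outer_col (X : forall p : 'I_d, 'M[R]_(n p, k)) (j : 'I_k)
    (m : midx n) : R :=
  \prod_(p < d) X p (m p) j.

Lemma dot_outer_col X i j :
  \sum_m outer_col X i m * outer_col X j m =
  \prod_(p < d) \sum_(l < n p) X p l i * X p l j.
Proof. by rewrite prod_sum_midx; apply: eq_bigr => m _; rewrite -big_split. Qed.

Lemma cp_obj_outer_col X :
  cp_obj U X = \sum_m (\sum_j outer_col X j m ^+ 2) * cpA U m.
Proof.
transitivity (\sum_j \sum_(r < Rk) \sum_m
                 outer_col X j m ^+ 2 * \prod_(p < d) U p (m p) r).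
  apply: eq_bigr => j _; apply: eq_bigr => r _; rewrite prod_sum_midx.
  apply: eq_bigr => m _; rewrite -prodrXl -big_split; apply: eq_bigr => p _ /=.
  ring.
under eq_bigr do rewrite exchange_big; rewrite exchange_big.
apply: eq_bigr => m _; rewrite mulr_suml; apply: eq_bigr => j _.
by rewrite mulr_sumr.
Qed.

Lemma cp_obj_le_topk (X : forall p : 'I_d, 'M[R]_(n p, k)) :
  cp_feasible X -> cp_obj U X <= topk_sum (cpA U) k.
Proof.
case=> _ X_orth.
have z_orth i j : \sum_m outer_col X i m * outer_col X j m = (i == j)%:R.
  by rewrite dot_outer_col X_orth.
have [S [cardS topS ->]] := topk_sum_topset (cpA U) (orthonormal_card z_orth).
rewrite cp_obj_outer_col; apply: weighted_sum_le_topset => //.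
  move=> m; rewrite orthonormal_sqr_le1 // andbT.
  by apply: sumr_ge0 => j _; exact: sqr_ge0.
by rewrite orthonormal_sum_sqr // cardS.
Qed.

Lemma basisX_feasible (idx : 'I_k -> midx n) :
  injective idx -> cp_feasible (basisX R idx).
Proof.
move=> idx_inj; split=> [p j|i j].
  by under eq_bigr do rewrite !mxE expr2; rewrite sum_delta eqxx sqrtr1.
under eq_bigr do under eq_bigr do rewrite !mxE.
under eq_bigr do rewrite sum_delta.
have [<-|ij] := eqVneq i j; first by rewrite big1 // => p _; rewrite eqxx.
have [p idx_ij] : exists p, idx i p != idx j p.
  apply/existsP; rewrite -negb_forall; apply: contra ij => /forallP idx_eq.
  by apply/eqP/idx_inj/ffunP => p; apply/eqP.
by rewrite (bigD1 p) //= (negbTE idx_ij) mul0r.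
Qed.

Lemma cp_obj_basisX (idx : 'I_k -> midx n) :
  cp_obj U (basisX R idx) = \sum_j cpA U (idx j).
Proof.
apply: eq_bigr => j _; apply: eq_bigr => r _; apply: eq_bigr => p _.
by under eq_bigr do rewrite !mxE; rewrite sum_delta eqxx mulr1.
Qed.
End CPProblem.

Theorem theorem1 (R : rcfType) (d : nat) (n : 'I_d -> nat) (Rk k : nat)
  (U : forall p : 'I_d, 'M[R]_(n p, Rk)) :
  (1 <= d)%N -> (forall p : 'I_d, (1 <= n p)%N) -> (1 <= Rk)%N ->
  (1 <= k)%N -> (k <= \prod_(p < d) n p)%N ->
  (forall X : forall p : 'I_d, 'M[R]_(n p, k),
     cp_feasible X -> cp_obj U X <= topk_sum (cpA U) k) /\
  (exists idx : 'I_k -> midx n, topk_positions (cpA U) idx) /\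
  (forall idx : 'I_k -> midx n, topk_positions (cpA U) idx ->
     cp_feasible (basisX R idx) /\ cp_obj U (basisX R idx) = topk_sum (cpA U) k).
Proof.
move=> _ _ _ _ k_le_N; split; first exact: cp_obj_le_topk.
split; first by apply: exists_topk_positions; rewrite card_midx.
move=> idx idx_top; split; first by apply: basisX_feasible; case: idx_top.
by rewrite cp_obj_basisX topk_positions_sum.
Qed.
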